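(* For every integer $n\geq 2$, the sequence $a_k=k^n/k!$, $k=1,2,\ldots$, is unimodal and has a unique maximizer, which is either $k=\lfloor e^{w(n)}\rfloor$ or $k=\lfloor e^{w(n)}\rfloor+1$.
   Context: $w(n)$ denotes Lambert's W function, i.e. the unique real $w>0$ with $n=we^{w}$. $\lfloor x\rfloor$ is the integer part of $x$. A sequence is unimodal if it is weakly increasing up to some index and weakly decreasing afterwards. *)

From Stdlib Require Import Reals Lra Lia ZArith.
Open Scope R_scope.

Definition is_lambertW (n w : R) : Prop := 0 < w /\ n = w * exp w.

Definition seq_a (n k : nat) : R := INR (k ^ n) / INR (fact k).

Definition unimodal_from1 (a : nat -> R) : Prop :=
  exists m : nat, (1 <= m)%nat /\
    (forall k : nat, (1 <= k)%nat -> (k < m)%nat -> a k <= a (S k)) /\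
    (forall k : nat, (m <= k)%nat -> a (S k) <= a k).

Definition unique_maximizer_from1 (a : nat -> R) (k : nat) : Prop :=
  (1 <= k)%nat /\ forall j : nat, (1 <= j)%nat -> j <> k -> a j < a k.

(* Integer part (floor): Stdlib's Int_part x = up x - 1 = floor x. *)
Definition floorZ (x : R) : Z := Int_part x.

From Stdlib Require Import Reals ZArith Lra Lia.
Open Scope R_scope.

(* Since a_(k+1) / a_k = (k+1)^(n-1) / k^n, the sequence
   increases at step k exactly when k^n < (k+1)^(n-1).  Taking logarithms,
   with t = ln (k+1) - ln k, the question is whether n t exceeds ln (k+1).
   The elementary bounds 1/(k+1) <= t <= 1/k together with n = w e^w show:
   if k+1 <= e^w then n t >= n / e^w = w >= ln (k+1), so the sequence
   increases; if e^w <= k then n t <= w <= ln (k+1), so it decreases.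
   Moreover ties never occur, since (k+1)^m = 1 (mod k) while k | k^(m+1). *)

Lemma ln_le (x y : R) : 0 < x -> x <= y -> ln x <= ln y.
Proof.
  intros Hx Hxy. destruct (Req_dec x y) as [->|Hne]; [lra|].
  left; apply ln_increasing; lra.
Qed.

Lemma ln_le_sub_one (x : R) : 0 < x -> ln x <= x - 1.
Proof. intros Hx. pose proof (exp_ineq1_le (ln x)) as H. rewrite exp_ln in H; lra. Qed.

(* The logarithmic increment t = ln (y+1) - ln y satisfies
   1/(y+1) <= t <= 1/y, stated without division. *)
Lemma ln_increment_bounds (y : R) : 0 < y ->
  let t := ln (y + 1) - ln y in 1 <= t * (y + 1) /\ t * y <= 1.
Proof.
  intros Hy t.
  assert (Hup : t = ln ((y + 1) / y)).
  { unfold t, Rdiv. rewrite ln_mult, ln_Rinv; try apply Rinv_0_lt_compat; lra. }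
  assert (Hlow : - t = ln (y / (y + 1))).
  { unfold t, Rdiv. rewrite ln_mult, ln_Rinv; try apply Rinv_0_lt_compat; lra. }
  pose proof (ln_le_sub_one ((y + 1) / y) ltac:(apply Rdiv_lt_0_compat; lra)) as Hupper.
  pose proof (ln_le_sub_one (y / (y + 1)) ltac:(apply Rdiv_lt_0_compat; lra)) as Hlower.
  rewrite <- Hup in Hupper. rewrite <- Hlow in Hlower.
  replace ((y + 1) / y - 1) with (/ y) in Hupper by (field; lra).
  replace (y / (y + 1) - 1) with (- / (y + 1)) in Hlower by (field; lra).
  assert (Inv1 : / (y + 1) * (y + 1) = 1) by (field; lra).
  assert (Inv2 : / y * y = 1) by (field; lra).
  split; nra.
Qed.

Lemma lambert_log_below (w y : R) : 0 < w -> 0 < y -> y + 1 <= exp w ->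
  w * exp w * ln y <= (w * exp w - 1) * ln (y + 1).
Proof.
  intros Hw Hy Hyx.
  destruct (ln_increment_bounds y Hy) as [Ht1 _].
  set (t := ln (y + 1) - ln y) in *.
  assert (Ht0 : 0 <= t) by nra.
  assert (Hxt : 1 <= exp w * t) by nra.
  assert (Hwt : w <= w * exp w * t) by nra.
  assert (Hlog : ln (y + 1) <= w) by (rewrite <- (ln_exp w); apply ln_le; lra).
  unfold t in Hwt. nra.
Qed.

Lemma lambert_log_above (w y : R) : 0 < w -> exp w <= y ->
  (w * exp w - 1) * ln (y + 1) <= w * exp w * ln y.
Proof.
  intros Hw Hxy.
  pose proof (exp_pos w) as Hx.
  assert (Hy : 0 < y) by lra.
  destruct (ln_increment_bounds y Hy) as [Ht1 Ht2].
  set (t := ln (y + 1) - ln y) in *.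
  assert (Ht0 : 0 <= t) by nra.
  assert (Hxt : exp w * t <= 1) by nra.
  assert (Hwt : w * exp w * t <= w) by nra.
  assert (Hlog : w <= ln (y + 1)) by (rewrite <- (ln_exp w); apply ln_le; lra).
  unfold t in Hwt. nra.
Qed.

Lemma pow_le_of_ln_le (a b : R) (p q : nat) : 0 < a -> 0 < b ->
  INR p * ln a <= INR q * ln b -> a ^ p <= b ^ q.
Proof.
  intros Ha Hb H. destruct (Rle_lt_dec (a ^ p) (b ^ q)) as [|Hlt]; [assumption|].
  apply ln_increasing in Hlt; [|apply pow_lt; lra].
  rewrite !ln_pow in Hlt by lra. lra.
Qed.

Lemma pow_le_succ_pow_below (n k : nat) (w : R) : (1 <= n)%nat -> (1 <= k)%nat ->
  0 < w -> INR n = w * exp w -> INR k + 1 <= exp w -> (k ^ n <= S k ^ (n - 1))%nat.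
Proof.
  intros Hn Hk Hw Hnw Hkx. apply INR_le. rewrite !pow_INR, S_INR.
  assert (Hk0 : 0 < INR k) by (apply lt_0_INR; lia).
  apply pow_le_of_ln_le; try lra.
  rewrite minus_INR, Hnw by lia. simpl INR.
  apply lambert_log_below; lra.
Qed.

Lemma succ_pow_le_pow_above (n k : nat) (w : R) : (1 <= n)%nat ->
  0 < w -> INR n = w * exp w -> exp w <= INR k -> (S k ^ (n - 1) <= k ^ n)%nat.
Proof.
  intros Hn Hw Hnw Hkx. apply INR_le. rewrite !pow_INR, S_INR.
  assert (Hk0 : 0 < INR k) by (pose proof (exp_pos w); lra).
  apply pow_le_of_ln_le; try lra.
  rewrite minus_INR, Hnw by lia. simpl INR.
  apply lambert_log_above; lra.
Qed.

Lemma succ_pow_mod (k m : nat) : exists q, (S k ^ m = k * q + 1)%nat.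
Proof.
  induction m as [|m [q Hq]]; [exists 0%nat; simpl; lia|].
  exists (q * S k + 1)%nat. rewrite Nat.pow_succ_r', Hq. nia.
Qed.

Lemma succ_pow_neq_pow (k m : nat) : (1 <= k)%nat -> (1 <= m)%nat ->
  (S k ^ m <> k ^ S m)%nat.
Proof.
  intros Hk Hm E. destruct (succ_pow_mod k m) as [q Hq].
  rewrite Hq, Nat.pow_succ_r' in E.
  destruct (Nat.eq_dec k 1) as [->|Hk1].
  - rewrite Nat.pow_1_l in E. simpl in Hq.
    assert (2 ^ 1 <= 2 ^ m)%nat by (apply Nat.pow_le_mono_r; lia). simpl in *. lia.
  - destruct (le_lt_dec (k ^ m) q); nia.
Qed.

(* a_(k+1) = (k+1)^(n-1) / k!, so a_k and a_(k+1) share the denominator k!. *)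
Lemma seq_a_succ (n k : nat) : (1 <= n)%nat ->
  seq_a n (S k) = INR (S k ^ (n - 1)) / INR (fact k).
Proof.
  intros Hn. unfold seq_a. destruct n as [|m]; [lia|].
  replace (S m - 1)%nat with m by lia.
  rewrite Nat.pow_succ_r'. change (fact (S k)) with (S k * fact k)%nat.
  rewrite !mult_INR. field. split; [apply INR_fact_neq_0 | apply not_0_INR; lia].
Qed.

Lemma seq_a_lt_succ (n k : nat) : (1 <= n)%nat -> (k ^ n < S k ^ (n - 1))%nat ->
  seq_a n k < seq_a n (S k).
Proof.
  intros Hn H. rewrite seq_a_succ by assumption. unfold seq_a, Rdiv.
  apply Rmult_lt_compat_r; [apply Rinv_0_lt_compat, INR_fact_lt_0 | apply lt_INR; lia].
Qed.

Lemma seq_a_succ_lt (n k : nat) : (1 <= n)%nat -> (S k ^ (n - 1) < k ^ n)%nat ->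
  seq_a n (S k) < seq_a n k.
Proof.
  intros Hn H. rewrite seq_a_succ by assumption. unfold seq_a, Rdiv.
  apply Rmult_lt_compat_r; [apply Rinv_0_lt_compat, INR_fact_lt_0 | apply lt_INR; lia].
Qed.

Section Monotonicity.
Variables (n : nat) (w : R).
Hypothesis (Hn : (2 <= n)%nat) (Hw : 0 < w) (Hnw : INR n = w * exp w).

Lemma seq_a_step_strict (k : nat) : (1 <= k)%nat ->
  seq_a n k < seq_a n (S k) \/ seq_a n (S k) < seq_a n k.
Proof.
  intros Hk. pose proof (succ_pow_neq_pow k (n - 1) Hk ltac:(lia)) as Hne.
  replace (S (n - 1)) with n in Hne by lia.
  destruct (le_lt_dec (S k ^ (n - 1)) (k ^ n)).
  - right; apply seq_a_succ_lt; lia.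
  - left; apply seq_a_lt_succ; lia.
Qed.

Lemma seq_a_increasing_below (k : nat) : (1 <= k)%nat -> INR k + 1 <= exp w ->
  seq_a n k < seq_a n (S k).
Proof.
  intros Hk Hkx. pose proof (pow_le_succ_pow_below n k w ltac:(lia) Hk Hw Hnw Hkx).
  pose proof (succ_pow_neq_pow k (n - 1) Hk ltac:(lia)) as Hne.
  replace (S (n - 1)) with n in Hne by lia.
  apply seq_a_lt_succ; lia.
Qed.

Lemma seq_a_decreasing_above (k : nat) : (1 <= k)%nat -> exp w <= INR k ->
  seq_a n (S k) < seq_a n k.
Proof.
  intros Hk Hkx. pose proof (succ_pow_le_pow_above n k w ltac:(lia) Hw Hnw Hkx).
  pose proof (succ_pow_neq_pow k (n - 1) Hk ltac:(lia)) as Hne.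
  replace (S (n - 1)) with n in Hne by lia.
  apply seq_a_succ_lt; lia.
Qed.

End Monotonicity.

Lemma increasing_run (a : nat -> R) (lo hi : nat) :
  (forall k, (lo <= k)%nat -> (k < hi)%nat -> a k < a (S k)) ->
  (lo < hi)%nat -> a lo < a hi.
Proof.
  intros Hinc. induction hi as [|hi IH]; intros Hlt; [lia|].
  destruct (Nat.eq_dec lo hi) as [->|Hne]; [apply Hinc; lia|].
  apply Rlt_trans with (a hi); [apply IH; [intros; apply Hinc|]; lia | apply Hinc; lia].
Qed.

Lemma decreasing_run (a : nat -> R) (lo hi : nat) :
  (forall k, (lo <= k)%nat -> (k < hi)%nat -> a (S k) < a k) ->
  (lo < hi)%nat -> a hi < a lo.
Proof.
  intros Hdec Hlt.
  enough (- a lo < - a hi) by lra.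
  apply (increasing_run (fun k => - a k)); [intros k H1 H2; specialize (Hdec k H1 H2); lra | assumption].
Qed.

Lemma strict_peak_unimodal (a : nat -> R) (M : nat) : (1 <= M)%nat ->
  (forall k, (1 <= k)%nat -> (k < M)%nat -> a k < a (S k)) ->
  (forall k, (M <= k)%nat -> a (S k) < a k) ->
  unimodal_from1 a /\ unique_maximizer_from1 a M.
Proof.
  intros HM Hinc Hdec. split.
  - exists M. split; [assumption|]. split; intros; left; auto.
  - split; [assumption|]. intros j Hj Hne.
    destruct (le_lt_dec M j).
    + apply decreasing_run; [intros; apply Hdec|]; lia.
    + apply increasing_run; [intros; apply Hinc|]; lia.
Qed.

Theorem proposition2 (n : nat) (hn : (2 <= n)%nat) (w : R) (hw : is_lambertW (INR n) w) :
  unimodal_from1 (seq_a n) /\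
  exists k : nat, unique_maximizer_from1 (seq_a n) k /\
    (Z.of_nat k = floorZ (exp w) \/ Z.of_nat k = (floorZ (exp w) + 1)%Z).
Proof.
  destruct hw as [Hw Hnw].
  (* K = floor (e^w) is at least 1 because e^w > 1 + w > 1. *)
  pose proof (exp_ineq1 w ltac:(lra)) as Hx1.
  destruct (base_Int_part (exp w)) as [Hfloor_le Hfloor_gt].
  assert (Hfloor_pos : (1 <= floorZ (exp w))%Z).
  { assert (H0 : 0 < IZR (Int_part (exp w))) by lra. apply lt_IZR in H0.
    unfold floorZ. lia. }
  set (K := Z.to_nat (floorZ (exp w))).
  assert (HKZ : Z.of_nat K = floorZ (exp w)) by (unfold K; lia).
  assert (HK1 : (1 <= K)%nat) by lia.
  assert (HKR : INR K = IZR (Int_part (exp w))) by (rewrite INR_IZR_INZ, HKZ; reflexivity).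
  assert (Hinc : forall k, (1 <= k)%nat -> (k < K)%nat -> seq_a n k < seq_a n (S k)).
  { intros k Hk HkK. apply seq_a_increasing_below with w; try assumption.
    apply le_INR in HkK. rewrite S_INR in HkK. lra. }
  assert (Hdec : forall k, (S K <= k)%nat -> seq_a n (S k) < seq_a n k).
  { intros k Hk. apply seq_a_decreasing_above with w; try assumption; [lia|].
    apply le_INR in Hk. rewrite S_INR in Hk. lra. }
  destruct (seq_a_step_strict n hn K HK1) as [Hup|Hdown].
  - destruct (strict_peak_unimodal (seq_a n) (S K) ltac:(lia)) as [Huni Hmax]; try assumption.
    { intros k Hk1 Hk2. destruct (Nat.eq_dec k K) as [->|]; [assumption | apply Hinc; lia]. }
    split; [assumption|]. exists (S K). split; [assumption | right; lia].
  - destruct (strict_peak_unimodal (seq_a n) K HK1 Hinc) as [Huni Hmax].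
    { intros k Hk. destruct (Nat.eq_dec k K) as [->|]; [assumption | apply Hdec; lia]. }
    split; [assumption|]. exists K. split; [assumption | left; assumption].
Qed.
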